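(* Let $p$ be a prime and $b$ an integer with $0<b<p$. If $(p-b)(p-b^{-1})=pk+1$ for some integer $k>1$, then $|\mathrm{inv}_{1,b}|>4$.
   Context: Let $S=\mathbb{C}[x_1,x_2]$, $\zeta=e^{2\pi i/p}$, $G=\mathbb{Z}/p\mathbb{Z}=\langle\zeta\rangle$ acting on $S$ by $x_1\mapsto\zeta x_1$, $x_2\mapsto\zeta^bx_2$, with invariant ring $S^G_{1,b}$ (spanned by monomials $x_1^cx_2^d$ with $c+bd\equiv0\pmod p$). $\mathrm{inv}_{1,b}$ denotes the minimal set of monomial generators of $S^G_{1,b}$ as a $\mathbb{C}$-algebra: the nonconstant invariant monomials that are not a product of two nonconstant invariant monomials. $b^{-1}$ is the unique integer $0<b^{-1}<p$ with $bb^{-1}\equiv1\pmod p$. *)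

From mathcomp Require Import all_boot.
Set Implicit Arguments. Unset Strict Implicit. Unset Printing Implicit Defensive.

(* A monomial x1^c x2^d of S = C[x1,x2] is encoded by its exponent pair (c, d).
   The generator zeta = e^{2 pi i/p} of G = Z/pZ acts by x1 |-> zeta x1,
   x2 |-> zeta^b x2, hence sends x1^c x2^d to zeta^(c + b d) x1^c x2^d; so the
   monomial is invariant iff c + b d = 0 (mod p). *)
Definition invariant_mono (p b : nat) (m : nat * nat) : Prop :=
  (p %| m.1 + b * m.2)%N.

Definition nonconst_mono (m : nat * nat) : Prop := m <> (0%N, 0%N).

Definition mono_mul (m1 m2 : nat * nat) : nat * nat :=
  ((m1.1 + m2.1)%N, (m1.2 + m2.2)%N).

Definition in_inv (p b : nat) (m : nat * nat) : Prop :=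
  [/\ nonconst_mono m, invariant_mono p b m &
      ~ exists m1 m2, [/\ nonconst_mono m1, invariant_mono p b m1,
                          nonconst_mono m2, invariant_mono p b m2 &
                          m = mono_mul m1 m2]].

(* Writing a = p - b, a monomial x1^c x2^d is invariant iff c = a d (mod p).
   Five indecomposable invariants are exhibited: x1^p, x2^p, x1^a x2,
   x1 x2^(p - b^-1) and, with p = a q + r, x1^(a-r) x2^(q+1); here 1 < a < p
   because a (p - b^-1) = pk + 1 > p, so 0 < r < a as p is prime.  The last
   monomial is indecomposable because a factor with 0 < d' <= q has a d' < p,
   so its x1-exponent is at least a d'; and it differs from x1 x2^(p - b^-1)
   because otherwise a (p - b^-1) = p + 1, i.e. k = 1.  The hypothesis
   b b^-1 = 1 (mod p) is implied by (p - b)(p - b^-1) = pk + 1 and not used. *)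
From mathcomp Require Import all_boot.
From mathcomp Require Import zify.

Set Implicit Arguments.
Unset Strict Implicit.
Unset Printing Implicit Defensive.

Lemma in_inv_intro p b c d :
  0 < c + d -> invariant_mono p b (c, d) ->
  (forall c1 d1 c2 d2, 0 < c1 + d1 -> invariant_mono p b (c1, d1) ->
     0 < c2 + d2 -> invariant_mono p b (c2, d2) ->
     c = c1 + c2 -> d = d1 + d2 -> False) ->
  in_inv p b (c, d).
Proof.
have nonconst_pos m : nonconst_mono m -> (0 < m.1 + m.2).
  by case: m => -[|?] [|?].
move=> cd_gt0 inv_cd no_split; split=> //; first by case=> c0 d0; lia.
case=> -[c1 d1] [[c2 d2] [/nonconst_pos nz1 inv1 /nonconst_pos nz2 inv2]].
by case=> c_eq d_eq; apply: (no_split c1 d1 c2 d2).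
Qed.

Section InvariantMonomials.

Variables p b : nat.
Hypothesis b_lt_p : b < p.
Local Notation a := (p - b).

Lemma invariant_monoE c d : invariant_mono p b (c, d) <-> c = a * d %[mod p].
Proof.
rewrite /invariant_mono /=.
have ->: (p %| c + b * d) = (c + b * d == a * d + b * d %[mod p]).
  by rewrite -mulnDl (subnK (ltnW b_lt_p)) modnMr.
by rewrite eqn_modDr; split=> /eqP.
Qed.

Lemma invariant_snd_gt0 c d :
  0 < c + d -> invariant_mono p b (c, d) -> c < p -> 0 < d.
Proof.
case: d => // cd_gt0 /invariant_monoE; rewrite muln0 mod0n => /[swap] c_lt_p.
by rewrite modn_small //; lia.
Qed.

Lemma invariant_fst_ge c d :
  invariant_mono p b (c, d) -> a * d < p -> a * d <= c.
Proof.
by move/invariant_monoE=> eq_cd /modn_small <-; rewrite -eq_cd leq_mod.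
Qed.

Lemma in_inv_x1_pow : in_inv p b (p, 0).
Proof.
apply: in_inv_intro; first lia.
  by rewrite /invariant_mono /= muln0 addn0.
move=> c1 d1 c2 d2 nz1 inv1 nz2 inv2 c_eq d_eq.
by have := invariant_snd_gt0 nz1 inv1; have := invariant_snd_gt0 nz2 inv2; lia.
Qed.

Lemma in_inv_snd1 c : c < p -> invariant_mono p b (c, 1) -> in_inv p b (c, 1).
Proof.
move=> c_lt_p inv_c; apply: in_inv_intro => //; first lia.
move=> c1 d1 c2 d2 nz1 inv1 nz2 inv2 c_eq d_eq.
by have := invariant_snd_gt0 nz1 inv1; have := invariant_snd_gt0 nz2 inv2; lia.
Qed.

Lemma in_inv_fst_lt_mul c d :
    c < p -> c < a * d -> a * d.-1 < p ->
  invariant_mono p b (c, d) -> in_inv p b (c, d).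
Proof.
move=> c_lt_p c_lt_ad ad_lt_p inv_cd; apply: in_inv_intro => //.
  by case: d c_lt_ad {ad_lt_p inv_cd} => [|d]; rewrite ?muln0 ?addnS.
move=> c1 d1 c2 d2 nz1 inv1 nz2 inv2 c_eq d_eq.
have d1_gt0 : 0 < d1 by apply: invariant_snd_gt0 nz1 inv1 _; lia.
have d2_gt0 : 0 < d2 by apply: invariant_snd_gt0 nz2 inv2 _; lia.
have ad1_lt_p : a * d1 < p.
  by apply: leq_ltn_trans ad_lt_p; rewrite leq_mul2l; lia.
have ad2_lt_p : a * d2 < p.
  by apply: leq_ltn_trans ad_lt_p; rewrite leq_mul2l; lia.
have := invariant_fst_ge inv1 ad1_lt_p; have := invariant_fst_ge inv2 ad2_lt_p.
by move: c_lt_ad; rewrite d_eq c_eq mulnDr; lia.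
Qed.

Hypothesis p_prime : prime p.
Hypothesis b_gt0 : 0 < b.

Lemma invariant_fst_gt0 c d :
  0 < c + d -> invariant_mono p b (c, d) -> d < p -> 0 < c.
Proof.
case: c => // d_gt0; rewrite /invariant_mono /= Euclid_dvdM //.
by case/orP=> /dvdn_leq; lia.
Qed.

Lemma in_inv_x2_pow : in_inv p b (0, p).
Proof.
apply: in_inv_intro; first lia.
  by rewrite /invariant_mono /= dvdn_mull.
move=> c1 d1 c2 d2 nz1 inv1 nz2 inv2 c_eq d_eq.
by have := invariant_fst_gt0 nz1 inv1; have := invariant_fst_gt0 nz2 inv2; lia.
Qed.

Lemma in_inv_fst1 d : d < p -> invariant_mono p b (1, d) -> in_inv p b (1, d).
Proof.
move=> d_lt_p inv_d; apply: in_inv_intro => //.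
move=> c1 d1 c2 d2 nz1 inv1 nz2 inv2 c_eq d_eq.
by have := invariant_fst_gt0 nz1 inv1; have := invariant_fst_gt0 nz2 inv2; lia.
Qed.

End InvariantMonomials.

Theorem proposition3p16 (p b binv k : nat) :
  prime p -> (0 < b < p)%N ->
  (0 < binv < p)%N -> (b * binv = 1 %[mod p])%N ->
  (1 < k)%N -> ((p - b) * (p - binv) = p * k + 1)%N ->
  exists s : seq (nat * nat),
    [/\ uniq s, (4 < size s)%N & forall m, m \in s -> in_inv p b m].
Proof.
move=> p_prime /andP[b_gt0 b_lt_p] /andP[binv_gt0 binv_lt_p] _ k_gt1 E.
have p_gt1 := prime_gt1 p_prime.
set a := p - b in E *; set e := p - binv in E *.
have a_gt1 : 1 < a by nia.
have a_lt_p : a < p by rewrite /a; lia.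
have r_gt0 : 0 < p %% a.
  by rewrite lt0n; apply/negP=> /(prime_nt_dvdP p_prime); lia.
have pqr : a * (p %/ a) + p %% a = p by rewrite mulnC -divn_eq.
have r_lt_a : p %% a < a by rewrite ltn_mod; lia.
set q := p %/ a in pqr *; set r := p %% a in pqr r_gt0 r_lt_a *.
have not_k1 : ~ (a - r = 1 /\ e = q.+1) by case=> r_eq e_eq; nia.
exists [:: (p, 0); (0, p); (a, 1); (1, e); (a - r, q.+1)]; split=> //.
  by rewrite /= !inE !xpair_eqE; lia.
move=> m; rewrite !inE => /orP[|/orP[|/orP[|/orP[]]]] /eqP->.
- exact: in_inv_x1_pow.
- exact: in_inv_x2_pow.
- by apply: in_inv_snd1 => //; apply/invariant_monoE; rewrite ?muln1.
- apply: in_inv_fst1 => //; first lia.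
  by apply/invariant_monoE; rewrite // -/a E mulnC modnMDl.
- apply: in_inv_fst_lt_mul; rewrite -/a //=; [lia | nia | nia |].
  apply/invariant_monoE => //.
  by rewrite -/a (_ : a * q.+1 = a - r + p) ?modnDr // mulnS; lia.
Qed.
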